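(* Let $\mathfrak{S}_H$ be a program sketch with set of holes $H$, let $\Phi$ be a specification, and let $R$ be a realisation of $\mathfrak{S}_H$. If $E$ is a program-level counterexample for the instance $\mathfrak{S}_H(R)$ and $\Phi$, then for every realisation $R'$ of $\mathfrak{S}_H$ with $\mathrm{Conflict}(E,R)\subseteq R'$, the set $E$ is also a program-level counterexample for $\mathfrak{S}_H(R')$ and $\Phi$.
   Context: Programs: a program $\mathcal{P}=(\mathrm{Var},E)$ consists of a finite set $\mathrm{Var}$ of variables, each with a finite integer range and an initial value, and a finite set $E$ of guarded commands of the form $g\to p_1:u_1+\dots+p_n:u_n$, where the guard $g$ is a Boolean expression over $\mathrm{Var}$, the $p_i$ are expressions over $\mathrm{Var}$ that evaluate to a probability distribution in every state satisfying $g$, and each update $u_i$ assigns expressions over $\mathrm{Var}$ to variables. A state is a valuation of $\mathrm{Var}$. A program is non-overlapping if no state satisfies the guards of two distinct commands; throughout, all programs (in particular all sketch instances) are assumed non-overlapping. The underlying MC $[\![\mathcal{P}]\!]$ has the valuations as states, the initial valuation as initial state, and from a state $s$ in which command $g\to\sum_i p_i:u_i$ is enabled it moves to $u_i(s)$ with probability $p_i(s)$ (summing coinciding successors). $\mathsf{fixdl}(\mathcal{P})$ is $\mathcal{P}$ extended with a command that is enabled exactly in states where no guard holds and produces a self-loop. For $E'\subseteq E$, $\mathcal{P}_{|E'}=(\mathrm{Var},E')$. A specification $\Phi$ is a finite set of reachability properties $\mathbb{P}_{\bowtie\lambda}(\lozenge G)$ ($\bowtie\in\{<,\leq,\geq,>\}$,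 $\lambda\in[0,1]$, $G$ a set of states given by a predicate); an MC satisfies $\Phi$ if the probability to reach $G$ from the initial state satisfies $\bowtie\lambda$ for every property, and $\mathcal{P}\models\Phi$ iff $[\![\mathsf{fixdl}(\mathcal{P})]\!]\models\Phi$. Program-level counterexample: for a program $\mathcal{P}=(\mathrm{Var},E)$ with $\mathcal{P}\not\models\Phi$, a set $E'\subseteq E$ is a program-level counterexample if for every non-overlapping program $\mathcal{P}'=(\mathrm{Var},E'')$ with $E''\supseteq E'$ we have $\mathsf{fixdl}(\mathcal{P}')\not\models\Phi$. Sketches: a sketch $\mathfrak{S}_H=(\mathcal{P}_H,\mathsf{Option}_H,\Gamma,\mathsf{cost})$ consists of a program $\mathcal{P}_H$ whose command expressions (guards, probabilities, updates) may contain hole symbols $h\in H$, a finite set $\mathsf{Option}_h$ of expressions over the program variables for each hole $h$, a set $\Gamma$ of propositional constraints over (named) options, and costs $\mathsf{cost}\colon\mathsf{Option}_H\to\mathbb{N}$. A realisation is a map $R$ with $R(h)\in\mathsf{Option}_h$ for every $h\in H$ satisfying all constraints in $\Gamma$; the instance $\mathfrak{S}_H(R)$ is the program obtained by replacing each hole $h$ by $R(h)$, so every command of $\mathfrak{S}_H(R)$ originates from a command of $\mathcal{P}_H$. A partial realisation is a map $\bar R$ with $\bar R(h)\in\mathsf{Option}_h\cup\{\bot\}$; $\bar R_1\subseteq\bar R_2$ iff $\bar R_1(h)\in\{\bar R_2(h),\bot\}$ for all $h$. For a set $E$ of commands of $\mathfrak{S}_H(R)$, $\mathrm{Conflict}(E,R)$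 is the partial realisation with $\mathrm{Conflict}(E,R)(h)=R(h)$ if $h$ occurs in some command of $\mathcal{P}_H$ from which a command of $E$ originates, and $\bot$ otherwise. *)

From mathcomp Require Import all_boot.
From Stdlib Require Import Reals ZArith ClassicalEpsilon.
From Coquelicot Require Import Rbar Lim_seq.

Set Implicit Arguments.
Unset Strict Implicit.
Unset Printing Implicit Defensive.

Inductive ty := TB | TZ | TR.
Definition tyD (t : ty) : Type :=
  match t with TB => bool | TZ => Z | TR => R end.
Definition ty_default (t : ty) : tyD t :=
  match t with TB => false | TZ => 0%Z | TR => 0%R end.

Section Lang.
Variable V : finType.

Definition state := V -> Z.

Inductive pexpr : ty -> Type :=
| PConst (t : ty) (c : tyD t) : pexpr t
| PVar (v : V) : pexpr TZ
| PUn (t1 t : ty) (f : tyD t1 -> tyD t) (e : pexpr t1) : pexpr t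
| PBin (t1 t2 t : ty) (f : tyD t1 -> tyD t2 -> tyD t) (e1 : pexpr t1) (e2 : pexpr t2) : pexpr t
| PIte (t : ty) (b : pexpr TB) (e1 e2 : pexpr t) : pexpr t.

Fixpoint peval (t : ty) (e : pexpr t) (s : state) : tyD t :=
  match e in pexpr t return tyD t with
  | PConst _ c => c
  | PVar v => s v
  | PUn _ _ f e1 => f (peval e1 s)
  | PBin _ _ _ f e1 e2 => f (peval e1 s) (peval e2 s)
  | PIte _ b e1 e2 => if peval b s then peval e1 s else peval e2 s
  end.

Record cmd (X : ty -> Type) := Cmd {
  guard : X TB;
  branches : list (X TR * list (V * X TZ)) (* p_1 : u_1 + ... + p_n : u_n *)
}.

Definition pcmd := cmd pexpr.

(* simultaneous assignment; unassigned variables keep their value *)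
Definition apply_upd (u : list (V * pexpr TZ)) (s : state) : state :=
  fun v => match List.find (fun p => p.1 == v) u with
           | Some p => peval p.2 s
           | None => s v
           end.

Definition enabled (c : pcmd) (s : state) : bool := peval (guard c) s.

Record vdecl := VDecl { vlo : V -> Z; vhi : V -> Z; vinit : V -> Z }.

Record program := Prog { pvars : vdecl; pcmds : list pcmd }.

Definition in_range (D : vdecl) (s : state) : Prop :=
  forall v, (vlo D v <= s v <= vhi D v)%Z.

Definition sumR (l : list R) : R := List.fold_right Rplus 0%R l.

Definition wf_prog (P : program) : Prop :=
  in_range (pvars P) (vinit (pvars P)) /\
  forall c, List.In c (pcmds P) -> forall s, in_range (pvars P) s -> enabled c s ->
    (forall b, List.In b (branches c) -> (0 <= (peval b.1 s : R))%R /\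
                                         in_range (pvars P) (apply_upd b.2 s)) /\
    sumR (List.map (fun b : pexpr TR * list (V * pexpr TZ) => (peval b.1 s : R)) (branches c)) = 1%R.

Definition nonoverlapping (P : program) : Prop :=
  forall c1 c2, List.In c1 (pcmds P) -> List.In c2 (pcmds P) -> c1 <> c2 ->
  forall s, in_range (pvars P) s -> ~ (enabled c1 s /\ enabled c2 s).

Definition is_program (P : program) : Prop := wf_prog P /\ nonoverlapping P.

Definition program_restrict (P : program) (E' : list pcmd) : program :=
  Prog (pvars P) E'.

(* fixdl: add a self-loop command enabled exactly where no guard holds *)
Definition some_guard (cs : list pcmd) : pexpr TB :=
  List.fold_right (fun c acc => PBin (t1:=TB) (t2:=TB) (t:=TB) orb (guard c) acc)
                  (PConst (t:=TB) false) cs.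
Definition fixdl (P : program) : program :=
  Prog (pvars P)
       (pcmds P ++ [:: Cmd (PUn (t1:=TB) (t:=TB) negb (some_guard (pcmds P)))
                          [:: (PConst (t:=TR) 1%R, [::])]]).

(* underlying MC: from s, the (unique, for non-overlapping programs) enabled
   command is taken; a state without enabled command is absorbing (this case
   never arises for fixdl(P)). reach_n n s = probability to reach G within n steps. *)
Definition next_cmd (cs : list pcmd) (s : state) : option pcmd :=
  List.find (fun c => enabled c s) cs.

Fixpoint reach_n (cs : list pcmd) (G : state -> bool) (n : nat) (s : state) : R :=
  match n with
  | 0 => if G s then 1%R else 0%R
  | n'.+1 =>
      if G s then 1%R else
      match next_cmd cs s with
      | Some c => sumR (List.map (fun b : pexpr TR * list (V * pexpr TZ) => (peval b.1 s * reach_n cs G n' (apply_upd b.2 s))%R)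
                                 (branches c))
      | None => reach_n cs G n' s
      end
  end.

Definition reach_prob (P : program) (G : state -> bool) : R :=
  real (Lim_seq (fun n => reach_n (pcmds P) G n (vinit (pvars P)))).

Inductive cmp := CLt | CLe | CGe | CGt.
Definition cmp_holds (c : cmp) (x l : R) : Prop :=
  match c with
  | CLt => (x < l)%R | CLe => (x <= l)%R | CGe => (l <= x)%R | CGt => (l < x)%R
  end.

Record rprop := RProp { rcmp : cmp; rlam : R; rgoal : state -> bool }.
Definition spec := list rprop.

Definition mc_sat (P : program) (Phi : spec) : Prop :=
  forall phi, List.In phi Phi -> cmp_holds (rcmp phi) (reach_prob P (rgoal phi)) (rlam phi).

Definition prog_sat (P : program) (Phi : spec) : Prop := mc_sat (fixdl P) Phi.

Definition is_cex (P : program) (Phi : spec) (E' : list pcmd) : Prop :=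
  ~ prog_sat P Phi /\
  List.incl E' (pcmds P) /\
  forall E'' : list pcmd, is_program (program_restrict P E'') ->
    List.incl E' E'' -> ~ prog_sat (program_restrict P E'') Phi.

Section Sketch.
Variable H : finType.
Variable hty : H -> ty.

Inductive sexpr : ty -> Type :=
| SConst (t : ty) (c : tyD t) : sexpr t
| SVar (v : V) : sexpr TZ
| SHole (h : H) : sexpr (hty h)
| SUn (t1 t : ty) (f : tyD t1 -> tyD t) (e : sexpr t1) : sexpr t
| SBin (t1 t2 t : ty) (f : tyD t1 -> tyD t2 -> tyD t) (e1 : sexpr t1) (e2 : sexpr t2) : sexpr t
| SIte (t : ty) (b : sexpr TB) (e1 e2 : sexpr t) : sexpr t.

Definition scmd := cmd sexpr.

(* propositional constraints over named options: atom (h, i) = "hole h takes option i" *)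
Inductive pform :=
| FTrue | FAtom (h : H) (i : nat) | FNot (f : pform)
| FAnd (f g : pform) | FOr (f g : pform) | FImp (f g : pform).

Fixpoint feval (Rl : H -> nat) (f : pform) : bool :=
  match f with
  | FTrue => true
  | FAtom h i => Rl h == i
  | FNot f => ~~ feval Rl f
  | FAnd f g => feval Rl f && feval Rl g
  | FOr f g => feval Rl f || feval Rl g
  | FImp f g => feval Rl f ==> feval Rl g
  end.

(* options of hole h are named by their index in sk_opts h *)
Record sketch := Sketch {
  sk_vars : vdecl;
  sk_cmds : list scmd;
  sk_opts : forall h : H, list (pexpr (hty h));
  sk_cons : list pform;
  sk_cost : forall h : H, nat -> nat
}.

Variable S : sketch.

Definition realisation (Rl : H -> nat) : Prop :=
  (forall h, (Rl h < size (sk_opts S h))%nat) /\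
  (forall f, List.In f (sk_cons S) -> feval Rl f).

Definition opt_of (Rl : H -> nat) (h : H) : pexpr (hty h) :=
  nth (PConst (ty_default (hty h))) (sk_opts S h) (Rl h).

Fixpoint subst (Rl : H -> nat) (t : ty) (e : sexpr t) : pexpr t :=
  match e in sexpr t return pexpr t with
  | SConst _ c => PConst c
  | SVar v => PVar v
  | SHole h => opt_of Rl h
  | SUn _ _ f e1 => PUn f (subst Rl e1)
  | SBin _ _ _ f e1 e2 => PBin f (subst Rl e1) (subst Rl e2)
  | SIte _ b e1 e2 => PIte (subst Rl b) (subst Rl e1) (subst Rl e2)
  end.

Definition inst_cmd (Rl : H -> nat) (c : scmd) : pcmd :=
  Cmd (subst Rl (guard c))
      (List.map (fun b => (subst Rl b.1, List.map (fun a => (a.1, subst Rl a.2)) b.2))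
                (branches c)).

Definition instance (Rl : H -> nat) : program :=
  Prog (sk_vars S) (List.map (inst_cmd Rl) (sk_cmds S)).

Fixpoint sholes (t : ty) (e : sexpr t) : list H :=
  match e with
  | SConst _ _ => [::]
  | SVar _ => [::]
  | SHole h => [:: h]
  | SUn _ _ _ e1 => sholes e1
  | SBin _ _ _ _ e1 e2 => sholes e1 ++ sholes e2
  | SIte _ b e1 e2 => sholes b ++ sholes e1 ++ sholes e2
  end.

Definition cmd_holes (c : scmd) : list H :=
  sholes (guard c) ++
  flatten (List.map (fun b => sholes b.1 ++ flatten (List.map (fun a => sholes a.2) b.2))
                    (branches c)).

(* partial realisations: None = bottom *)
Definition prealisation := H -> option nat.
Definition psub (R1 R2 : prealisation) : Prop :=
  forall h, R1 h = None \/ R1 h = R2 h.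
Definition as_prealisation (Rl : H -> nat) : prealisation := fun h => Some (Rl h).

Definition conflict_hole (E : list pcmd) (Rl : H -> nat) (h : H) : Prop :=
  exists c cH, List.In c E /\ List.In cH (sk_cmds S) /\ inst_cmd Rl cH = c /\
               List.In h (cmd_holes cH).

Definition Conflict (E : list pcmd) (Rl : H -> nat) : prealisation :=
  fun h => if excluded_middle_informative (conflict_hole E Rl h)
           then Some (Rl h) else None.

End Sketch.
End Lang.

From mathcomp Require Import all_boot.
From Stdlib Require Import Reals ClassicalEpsilon.

(* Instantiating a sketch command only reads the options of the holes occurring
   in it, so every command of E is also produced by any realisation R' that
   agrees with R on Conflict(E, R).  Being a program-level counterexample only
   depends on the commands E and on the variables of the program, and all
   instances share the variables of the sketch. *)

Lemma In_flatten_map {A B : Type} (f : A -> list B) {l : list A} {x : A} {y : B} :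
  List.In x l -> List.In y (f x) -> List.In y (flatten (List.map f l)).
Proof.
elim: l => [|a l IHl] //= [<-|xl] yfx; apply: List.in_or_app; [left|right] => //.
exact: IHl.
Qed.

Section Instantiation.
Variables (V H : finType) (hty : H -> ty) (S : sketch V hty).

Lemma subst_eq_on_holes (Rl Rl' : H -> nat) t (e : sexpr V hty t) :
  (forall h, List.In h (sholes e) -> Rl h = Rl' h) -> subst S Rl e = subst S Rl' e.
Proof.
elim: e => //= [h | t1 t0 f e IHe | t1 t2 t0 f e1 IH1 e2 IH2 | t0 b IHb e1 IH1 e2 IH2] eqR.
- by rewrite /opt_of eqR //=; left.
- by rewrite IHe.
- by rewrite IH1 ?IH2 // => h hin; apply: eqR; rewrite List.in_app_iff; tauto.
- by rewrite IHb ?IH1 ?IH2 // => h hin; apply: eqR; rewrite !List.in_app_iff; tauto.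
Qed.

Lemma inst_cmd_eq_on_holes (Rl Rl' : H -> nat) (c : scmd V hty) :
  (forall h, List.In h (cmd_holes c) -> Rl h = Rl' h) ->
  inst_cmd S Rl c = inst_cmd S Rl' c.
Proof.
rewrite /inst_cmd /cmd_holes => eqR.
rewrite (@subst_eq_on_holes Rl Rl') => [|h hin]; last by apply: eqR; apply: List.in_or_app; left.
congr Cmd; apply: List.map_ext_in => b bin.
have eqRb h : List.In h (sholes b.1 ++ flatten (List.map (fun a => sholes a.2) b.2)) ->
    Rl h = Rl' h.
  move=> hin; apply: eqR; apply: List.in_or_app; right.
  exact: (In_flatten_map _ bin hin).
rewrite (@subst_eq_on_holes Rl Rl') => [|h hin]; last by apply: eqRb; apply: List.in_or_app; left.
congr pair; apply: List.map_ext_in => a ain.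
rewrite (@subst_eq_on_holes Rl Rl') // => h hin; apply: eqRb; apply: List.in_or_app; right.
exact: (In_flatten_map _ ain hin).
Qed.

Lemma Conflict_agree {E : list (pcmd V)} {Rl Rl' : H -> nat} {h : H} :
  psub (Conflict S E Rl) (as_prealisation Rl') -> conflict_hole S E Rl h ->
  Rl h = Rl' h.
Proof.
move=> /(_ h); rewrite /Conflict /as_prealisation.
by case: excluded_middle_informative => //= _ [|[]].
Qed.

Lemma incl_instance_Conflict (E : list (pcmd V)) (Rl Rl' : H -> nat) :
  psub (Conflict S E Rl) (as_prealisation Rl') ->
  List.incl E (pcmds (instance S Rl)) -> List.incl E (pcmds (instance S Rl')).
Proof.
move=> subR inclE c cE; have /List.in_map_iff [cH [eq_c cHin]] := inclE c cE.
apply/List.in_map_iff; exists cH; split => //; rewrite -eq_c; symmetry.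
apply: inst_cmd_eq_on_holes => h hin.
by apply: (Conflict_agree subR); exists c, cH.
Qed.

End Instantiation.

Lemma is_cex_same_vars {V : finType} (P P' : program V) (Phi : spec V) (E : list (pcmd V)) :
  pvars P = pvars P' -> is_program P' -> List.incl E (pcmds P') ->
  is_cex P Phi E -> is_cex P' Phi E.
Proof.
move=> eq_vars progP' inclE' [_ [_ cexE]]; split; [|split] => //.
- by have := cexE (pcmds P'); rewrite /program_restrict eq_vars; apply.
- by rewrite /program_restrict -eq_vars.
Qed.

Theorem proposition2 (V H : finType) (hty : H -> ty) (S : sketch V hty)
  (Phi : spec V)
  (HPhi : forall phi, List.In phi Phi -> (0 <= rlam phi <= 1)%R)
  (Hinst : forall Rl, realisation S Rl -> is_program (instance S Rl))
  (Rl : H -> nat) (HR : realisation S Rl) (E : list (pcmd V))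
  (HE : is_cex (instance S Rl) Phi E) :
  forall Rl' : H -> nat, realisation S Rl' ->
    psub (Conflict S E Rl) (as_prealisation Rl') ->
    is_cex (instance S Rl') Phi E.
Proof.
move=> Rl' HR' subR; apply: (is_cex_same_vars (instance S Rl)) => //.
- exact: Hinst.
- by apply: incl_instance_Conflict subR _; case: HE => _ [].
Qed.
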